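(* For every integer $n\ge1$, $d_n \ge 2^{2^{n-1}}$.
   Context: A delta-matroid $(E,\mathcal F)$ consists of a finite ground set $E$ and a non-empty collection $\mathcal F$ of subsets of $E$ (the feasible sets) satisfying the symmetric exchange axiom: for all $X,Y\in\mathcal F$ and every $e\in X\triangle Y$ there exists $f\in X\triangle Y$ (possibly $f=e$) with $X\triangle\{e,f\}\in\mathcal F$. Let $d_n$ denote the number of labelled delta-matroids with ground set $[n]=\{1,\dots,n\}$, i.e. the number of collections $\mathcal F$ of subsets of $[n]$ such that $([n],\mathcal F)$ is a delta-matroid. *)

From mathcomp Require Import all_boot.
Set Implicit Arguments. Unset Strict Implicit. Unset Printing Implicit Defensive.

Definition symdiff (T : finType) (A B : {set T}) : {set T} := (A :\: B) :|: (B :\: A).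

Definition is_delta_matroid (n : nat) (F : {set {set 'I_n}}) : bool :=
  (F != set0) &&
  [forall X in F, forall Y in F, forall e in symdiff X Y,
     exists f in symdiff X Y, symdiff X [set e; f] \in F].

Definition num_delta_matroids (n : nat) : nat :=
  #|[set F : {set {set 'I_n}} | is_delta_matroid F]|.

From mathcomp Require Import all_boot.
From mathcomp Require Import zify.
Set Implicit Arguments. Unset Strict Implicit.

(* Any family containing all odd-size sets is a delta-matroid: when the exchange
   axiom starts from an even set X, toggling the single element e lands on an odd
   set; when X is odd, toggling e together with some other f of X (+) Y does, and
   if no such f exists then X (+) Y = {e} and X (+) {e} = Y.  Adjoining the odd
   sets to an arbitrary family of even sets is injective, and there are
   2^(n-1) even sets, hence at least 2^(2^(n-1)) delta-matroids. *)

Section Symdiff.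

Variable T : finType.
Implicit Types A B X Y : {set T}.

Lemma card_symdiff A B : #|A| + #|B| = (#|A :&: B|).*2 + #|symdiff A B|.
Proof.
rewrite /symdiff cardsU.
have -> : (A :\: B) :&: (B :\: A) = set0.
  by apply/setP => x; rewrite !inE; case: (x \in A); case: (x \in B).
rewrite cards0 subn0 -(cardsID B A) -(cardsID A B) setIC -addnn; lia.
Qed.

Lemma odd_symdiff A B : odd #|symdiff A B| = odd #|A| (+) odd #|B|.
Proof.
have /(congr1 odd) := card_symdiff A B.
by rewrite !oddD odd_double => ->.
Qed.

Lemma symdiffK X Y : symdiff X (symdiff X Y) = Y.
Proof.
by apply/setP => x; rewrite /symdiff !inE; case: (x \in X); case: (x \in Y).
Qed.

End Symdiff.

Definition odd_sets (T : finType) : {set {set T}} := [set S : {set T} | odd #|S|].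

Lemma card_sets (T : finType) : #|{set T}| = 2 ^ #|T|.
Proof. by have := card_powerset [set: T]; rewrite powersetT !cardsT. Qed.

Lemma card_even_sets (T : finType) (x : T) : #|~: odd_sets T| = 2 ^ #|T|.-1.
Proof.
pose toggle S := symdiff S [set x].
have toggleK : involutive toggle.
  move=> S; apply/setP => y; rewrite /toggle /symdiff !inE.
  by case: (y \in S); case: (y == x).
have odd_toggle S : odd #|toggle S| = ~~ odd #|S|.
  by rewrite odd_symdiff cards1 addbT.
have toggle_odd : ~: odd_sets T = toggle @: odd_sets T.
  apply/setP => S; rewrite !inE; apply/idP/imsetP => [evenS | [R oddR ->]].
    by exists (toggle S); rewrite ?toggleK // inE odd_toggle.
  by rewrite odd_toggle negbK; rewrite inE in oddR.
have := cardsC (odd_sets T).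
rewrite toggle_odd card_imset; last exact: can_inj toggleK.
have T_gt0 : 0 < #|T| by apply/card_gt0P; exists x.
by rewrite card_sets -{1}(prednK T_gt0) expnS addnn mul2n => /double_inj.
Qed.

Lemma delta_matroid_odd_sets n (F : {set {set 'I_n}}) :
  0 < n -> odd_sets 'I_n \subset F -> is_delta_matroid F.
Proof.
move=> n_gt0 odd_setsF.
have oddF (Z : {set 'I_n}) : odd #|Z| -> Z \in F.
  by move=> oddZ; apply: (subsetP odd_setsF); rewrite inE.
apply/andP; split.
  by apply/set0Pn; exists [set Ordinal n_gt0]; apply: oddF; rewrite cards1.
apply/forall_inP => X XF; apply/forall_inP => Y YF; apply/forall_inP => e eXY.
have [oddX | evenX] := boolP (odd #|X|); last first.
  apply/exists_inP; exists e => //; apply: oddF.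
  by rewrite odd_symdiff setUid cards1 (negbTE evenX).
have [f /andP [fXY fe] | only_e] := pickP [pred f | (f \in symdiff X Y) && (f != e)].
  apply/exists_inP; exists f => //; apply: oddF.
  by rewrite odd_symdiff cards2 eq_sym fe oddX.
apply/exists_inP; exists e => //; rewrite setUid.
suff -> : [set e] = symdiff X Y by rewrite symdiffK.
apply/setP => x; rewrite inE; apply/eqP/idP => [-> // | xXY].
by apply/eqP; move: (only_e x) => /= /negbT; rewrite xXY negbK.
Qed.

Lemma add_odd_sets_inj (T : finType) :
  {in powerset (~: odd_sets T) &, injective (fun G : {set {set T}} => G :|: odd_sets T)}.
Proof.
have addK G : G \in powerset (~: odd_sets T) -> (G :|: odd_sets T) :&: ~: odd_sets T = G.
  by rewrite powersetE => /setIidPl evenG; rewrite setIUl setICr setU0.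
by move=> G H /addK {2}<- /addK {2}<- ->.
Qed.

Theorem corollary3p3 (n : nat) : 1 <= n -> 2 ^ (2 ^ n.-1) <= num_delta_matroids n.
Proof.
move=> n_gt0.
rewrite -{1}(card_ord n) -(card_even_sets (Ordinal n_gt0)) -card_powerset.
rewrite -(card_in_imset (@add_odd_sets_inj 'I_n)).
apply: subset_leq_card; apply/subsetP => _ /imsetP [G _ ->]; rewrite inE.
by apply: delta_matroid_odd_sets => //; apply: subsetUr.
Qed.
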